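(* Let $R$ be a commutative $\mathbb{Z}[\mu_{4p^\infty},\frac1{\sqrt p}]$-algebra and let $\eta,\eta'$ be two Heisenberg representations for the Heisenberg triple $(C\widetilde\boxtimes V,C,\nu)$ over $R$, with associated Weil representations $\omega,\omega'$. Then the inclusion \[ \mathrm{Hom}_{R(\mathrm{Sp}(V)\ltimes(C\widetilde\boxtimes V))}(\omega\ltimes\eta,\omega'\ltimes\eta')\subseteq\mathrm{Hom}_{R(C\widetilde\boxtimes V)}(\eta,\eta') \] is an equality.
   Context: $p$ odd prime; $C$ cyclic of order $p^N$, $\mu_p\subset C$ of order $p$; $V$ a finite-dimensional $\mathbb{F}_p$-space with nondegenerate symplectic form $\theta$ valued in $\mu_p$; $C\widetilde\boxtimes V$ is $C\times V$ with law $(a_1,v_1)(a_2,v_2)=(a_1a_2\sqrt{\theta(v_1,v_2)},v_1+v_2)$, with $\mathrm{Sp}(V)$ acting on the second coordinate; $\nu:C\to\mu_{p^\infty}\subset R^\times$ injective. A Heisenberg representation for $(C\widetilde\boxtimes V,C,\nu)$ is a smooth $R(C\widetilde\boxtimes V)$-module that is finitely generated projective over $R$, $\nu$-isotypic on $C$, with endomorphism ring $R$. For a Lagrangian $W\subseteq V$, $\eta_{\nu,W}=\mathrm{ind}_{C\times W}^{C\widetilde\boxtimes V}(\nu\times1)$ and $\omega_{\nu,W}\ltimes\eta_{\nu,W}$ is the base change to $R$ of Gérardin's Weil representation of $\mathrm{Sp}(V)$ (characterized by $\omega(g)\eta(k)\omega(g)^{-1}=\eta(g\cdot k)$ for $k\in\mu_p\widetilde\boxtimes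 V$, with Gérardin's normalization if $p=3,\dim V=2$) restricted to the lattice of $\mathbb{Z}[\mu_{4p^\infty},\frac1{\sqrt p}]$-valued functions. The Weil representation $\omega$ associated to a Heisenberg representation $\eta$ is obtained by transporting $(\omega_{\nu,W}\ltimes\eta_{\nu,W})\otimes1$ along the evaluation isomorphism $\eta_{\nu,W}\otimes_R\mathrm{Hom}_{R(C\widetilde\boxtimes V)}(\eta_{\nu,W},\eta)\xrightarrow{\sim}\eta$; it is independent of $W$. *)

From HB Require Import structures.
From mathcomp Require Import all_boot all_order all_algebra all_field.
Set Implicit Arguments. Unset Strict Implicit. Unset Printing Implicit Defensive.
Import GRing.Theory.
Local Open Scope ring_scope.

(* Model: C = 'Z_(p^N) written additively (cyclic of order p^N);
   mu_p = p^(N-1) 'Z_(p^N), identified with 'F_p via iota_mu;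
   V = 'cV['F_p]_n; the mu_p-valued symplectic form is iota_mu o theta. *)

Definition heis (p N n : nat) := ('Z_(p ^ N) * 'cV['F_p]_n)%type.

Definition iota_mu (p N : nat) (x : 'F_p) : 'Z_(p ^ N) := (p ^ N.-1 * val x)%N%:R.

(* (a1,v1)(a2,v2) = (a1 a2 sqrt(theta(v1,v2)), v1+v2); additively the unique
   square root of iota_mu x in C (odd order) is iota_mu (x/2). *)
Definition heis_mul (p N n : nat) (theta : 'cV['F_p]_n -> 'cV['F_p]_n -> 'F_p)
  (h1 h2 : heis p N n) : heis p N n :=
  (h1.1 + h2.1 + iota_mu N (theta h1.2 h2.2 / 2%:R), h1.2 + h2.2).

Definition is_symplectic_form (p n : nat) (theta : 'cV['F_p]_n -> 'cV['F_p]_n -> 'F_p) : Prop :=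
  (forall a u v w, theta (a *: u + v) w = a * theta u w + theta v w) /\
  (forall a u v w, theta u (a *: v + w) = a * theta u v + theta u w) /\
  (forall v, theta v v = 0) /\
  (forall v, (forall w, theta v w = 0) -> v = 0).

Definition in_Sp (p n : nat) (theta : 'cV['F_p]_n -> 'cV['F_p]_n -> 'F_p) (g : 'M['F_p]_n) : Prop :=
  g \in unitmx /\ forall v w, theta (g *m v) (g *m w) = theta v w.

Definition is_Lagrangian (p n : nat) (theta : 'cV['F_p]_n -> 'cV['F_p]_n -> 'F_p)
  (W : {set 'cV['F_p]_n}) : Prop :=
  0 \in W /\ (forall a v w, v \in W -> w \in W -> a *: v + w \in W) /\
  (forall v, v \in W <-> (forall w, w \in W -> theta v w = 0)).

(* R is a commutative Z[mu_{4p^oo}, 1/sqrt p]-algebra: a compatible system of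
   primitive 4p^k-th roots of unity (roots of the cyclotomic polynomials) and
   p invertible (equivalently sqrt p invertible). *)
Definition Zmu_sqrtp_algebra (R : comPzRingType) (p : nat) : Prop :=
  (exists zeta : nat -> R, forall k,
      \sum_(i < size 'Phi_(4 * p ^ k)) (('Phi_(4 * p ^ k))`_i)%:~R * zeta k ^+ i = 0 /\
      zeta k.+1 ^+ p = zeta k) /\
  exists u : R, u * p%:R = 1.

Definition is_inj_char (R : comPzRingType) (p N : nat) (nu : 'Z_(p ^ N) -> R) : Prop :=
  (forall a b, nu (a + b) = nu a * nu b) /\ nu 0 = 1 /\ injective nu.

Definition Rlinear (R : comPzRingType) (M M' : lmodType R) (f : M -> M') : Prop :=
  forall (a : R) x y, f (a *: x + y) = a *: f x + f y.

Definition is_fg_projective (R : comPzRingType) (M : lmodType R) : Prop :=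
  exists m (i : M -> 'rV[R]_m) (pi : 'rV[R]_m -> M),
    Rlinear i /\ Rlinear pi /\ forall x, pi (i x) = x.

Definition is_heis_rep (R : comPzRingType) (p N n : nat)
  (theta : 'cV['F_p]_n -> 'cV['F_p]_n -> 'F_p) (M : lmodType R)
  (rho : heis p N n -> M -> M) : Prop :=
  (forall h, Rlinear (rho h)) /\
  (forall h1 h2 x, rho (heis_mul theta h1 h2) x = rho h1 (rho h2 x)) /\
  (forall x, rho (0, 0) x = x).

Definition hom_H (R : comPzRingType) (p N n : nat)
  (theta : 'cV['F_p]_n -> 'cV['F_p]_n -> 'F_p) (M M' : lmodType R)
  (rho : heis p N n -> M -> M) (rho' : heis p N n -> M' -> M') (f : M -> M') : Prop :=
  Rlinear f /\ forall h x, f (rho h x) = rho' h (f x).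

Definition is_heisenberg_rep (R : comPzRingType) (p N n : nat)
  (theta : 'cV['F_p]_n -> 'cV['F_p]_n -> 'F_p) (nu : 'Z_(p ^ N) -> R)
  (M : lmodType R) (rho : heis p N n -> M -> M) : Prop :=
  is_heis_rep theta rho /\
  (forall c x, rho (c, 0) x = nu c *: x) /\
  is_fg_projective M /\
  (forall f : M -> M, hom_H theta rho rho f -> exists r : R, forall x, f x = r *: x) /\
  (forall r : R, (forall x : M, r *: x = 0) -> r = 0).

(* eta_{nu,W} = ind_{C x W}^{C~V} (nu x 1): the functions f on C~V with
   f((c,w)h) = nu(c) f(h), with C~V acting by right translation. *)
Definition in_etaW (R : comPzRingType) (p N n : nat)
  (theta : 'cV['F_p]_n -> 'cV['F_p]_n -> 'F_p) (nu : 'Z_(p ^ N) -> R)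
  (W : {set 'cV['F_p]_n}) (f : {ffun heis p N n -> R}) : Prop :=
  forall c w h, w \in W -> f (heis_mul theta (c, w) h) = nu c * f h.

Definition rtrans (R : comPzRingType) (p N n : nat)
  (theta : 'cV['F_p]_n -> 'cV['F_p]_n -> 'F_p) (h : heis p N n)
  (f : {ffun heis p N n -> R}) : {ffun heis p N n -> R} :=
  [ffun x => f (heis_mul theta x h)].

Definition lincomb (R : comPzRingType) (T : finType) (a : R) (f g : {ffun T -> R}) :
  {ffun T -> R} := [ffun x => a * f x + g x].

Definition is_weil_model (R : comPzRingType) (p N n : nat)
  (theta : 'cV['F_p]_n -> 'cV['F_p]_n -> 'F_p) (nu : 'Z_(p ^ N) -> R)
  (W : {set 'cV['F_p]_n})
  (omW : 'M['F_p]_n -> {ffun heis p N n -> R} -> {ffun heis p N n -> R}) : Prop :=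
  (forall g, in_Sp theta g ->
     (forall f, in_etaW theta nu W f -> in_etaW theta nu W (omW g f)) /\
     (forall a f1 f2, in_etaW theta nu W f1 -> in_etaW theta nu W f2 ->
        omW g (lincomb a f1 f2) = lincomb a (omW g f1) (omW g f2)) /\
     (forall (x : 'F_p) v f, in_etaW theta nu W f ->
        omW g (rtrans theta (iota_mu N x, v) f)
        = rtrans theta (iota_mu N x, g *m v) (omW g f))) /\
  (forall g1 g2 f, in_Sp theta g1 -> in_Sp theta g2 -> in_etaW theta nu W f ->
     omW (g1 *m g2) f = omW g1 (omW g2 f)) /\
  (forall f, in_etaW theta nu W f -> omW 1%:M f = f).

Definition homW (R : comPzRingType) (p N n : nat)
  (theta : 'cV['F_p]_n -> 'cV['F_p]_n -> 'F_p) (nu : 'Z_(p ^ N) -> R)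
  (W : {set 'cV['F_p]_n}) (M : lmodType R) (rho : heis p N n -> M -> M)
  (phi : {ffun heis p N n -> R} -> M) : Prop :=
  (forall a f1 f2, in_etaW theta nu W f1 -> in_etaW theta nu W f2 ->
     phi (lincomb a f1 f2) = a *: phi f1 + phi f2) /\
  (forall h f, in_etaW theta nu W f -> phi (rtrans theta h f) = rho h (phi f)).

(* omega is the Weil representation associated to (M, rho): it is the
   transport of omega_W (x) 1 along the evaluation isomorphism
   eta_W (x) Hom(eta_W, M) -> M, i.e. omega(g)(phi(f)) = phi(omega_W(g) f). *)
Definition is_assoc_weil (R : comPzRingType) (p N n : nat)
  (theta : 'cV['F_p]_n -> 'cV['F_p]_n -> 'F_p) (nu : 'Z_(p ^ N) -> R)
  (W : {set 'cV['F_p]_n})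
  (omW : 'M['F_p]_n -> {ffun heis p N n -> R} -> {ffun heis p N n -> R})
  (M : lmodType R) (rho : heis p N n -> M -> M) (om : 'M['F_p]_n -> M -> M) : Prop :=
  forall g, in_Sp theta g ->
    Rlinear (om g) /\
    forall phi, homW theta nu W rho phi ->
      forall f, in_etaW theta nu W f -> om g (phi f) = phi (omW g f).

Definition hom_SpH (R : comPzRingType) (p N n : nat)
  (theta : 'cV['F_p]_n -> 'cV['F_p]_n -> 'F_p) (M M' : lmodType R)
  (rho : heis p N n -> M -> M) (rho' : heis p N n -> M' -> M')
  (om : 'M['F_p]_n -> M -> M) (om' : 'M['F_p]_n -> M' -> M') (f : M -> M') : Prop :=
  hom_H theta rho rho' f /\
  forall g x, in_Sp theta g -> f (om g x) = om' g (f x).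

From HB Require Import structures.
From mathcomp Require Import all_boot all_order all_algebra all_field ring.
Import GRing.Theory.
Local Open Scope ring_scope.
Set Implicit Arguments. Unset Strict Implicit. Unset Printing Implicit Defensive.

(* An [R(C~V)]-intertwiner [f : M -> M'] commutes with the Weil actions on the
   image of every [R(C~V)]-map [phi : eta_W -> M]: there [omega(g) phi = phi omega_W(g)],
   and [f \o phi] is again such a map. These images span [M]: for the convolutions
   [phi_z F = sum_h F(h) rho(h^-1) z] and the function [F0 : (c, v) |-> nu(c) 1_W(v)]
   of [eta_W], the vectors [phi_{rho(0,-v) x} (F0 translated by (0,v))] sum to
   [p^(N+n) x], by orthogonality of the characters [v |-> chi(theta u v)], where
   [chi = nu o iota_mu]. That orthogonality needs [sum_k chi k = 0] in [R], which the
   hypotheses on [nu] do not give; it is forced by the Weil model: with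
   [e = (1/p) sum_k chi k], which absorbs every [chi k], a transvection along
   [v \notin W] makes [e F0] invariant under [(0, v)], whence [e = 0]. *)

Section RLinear.
Variables (R : comPzRingType) (M M' : lmodType R) (f : M -> M').
Hypothesis f_lin : Rlinear f.

Lemma Rlinear0 : f 0 = 0.
Proof.
have := f_lin 1 0 0; rewrite !scale1r addr0 => f00.
by apply: (addrI (f 0)); rewrite addr0 -f00.
Qed.

Lemma RlinearD x y : f (x + y) = f x + f y.
Proof. by have := f_lin 1 x y; rewrite !scale1r. Qed.

Lemma RlinearZ a x : f (a *: x) = a *: f x.
Proof. by have := f_lin a x 0; rewrite !addr0 Rlinear0 addr0. Qed.

Lemma Rlinear_sum (I : finType) (G : I -> M) : f (\sum_i G i) = \sum_i f (G i).
Proof.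
apply: (big_rec2 (fun x y => f x = y)); first exact: Rlinear0.
by move=> i x y _ <-; rewrite RlinearD.
Qed.

End RLinear.

Section Symplectic.
Variables (p n : nat) (theta : 'cV['F_p]_n -> 'cV['F_p]_n -> 'F_p).
Hypothesis symp : is_symplectic_form theta.
Local Notation V := 'cV['F_p]_n.

Lemma theta_linearl w : Rlinear (fun u : V => theta u w : ('F_p)^o).
Proof. by move=> a u v; apply: symp.1. Qed.

Lemma theta_linearr u : Rlinear (theta u : V -> ('F_p)^o).
Proof. by move=> a v w; apply: symp.2.1. Qed.

Lemma theta0l w : theta 0 w = 0. Proof. exact: (Rlinear0 (theta_linearl w)). Qed.
Lemma theta0r u : theta u 0 = 0. Proof. exact: (Rlinear0 (theta_linearr u)). Qed.
Lemma thetaDl u v w : theta (u + v) w = theta u w + theta v w.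
Proof. exact: (RlinearD (theta_linearl w)). Qed.
Lemma thetaDr u v w : theta u (v + w) = theta u v + theta u w.
Proof. exact: (RlinearD (theta_linearr u)). Qed.
Lemma thetaZl a u w : theta (a *: u) w = a * theta u w.
Proof. exact: (RlinearZ (theta_linearl w)). Qed.
Lemma thetaZr a u w : theta u (a *: w) = a * theta u w.
Proof. exact: (RlinearZ (theta_linearr u)). Qed.
Lemma thetaNl u w : theta (- u) w = - theta u w.
Proof. by rewrite -scaleN1r thetaZl mulN1r. Qed.
Lemma thetaNr u w : theta u (- w) = - theta u w.
Proof. by rewrite -scaleN1r thetaZr mulN1r. Qed.

Lemma theta_self v : theta v v = 0. Proof. exact: symp.2.2.1. Qed.

Lemma theta_anti u w : theta w u = - theta u w.
Proof.
apply/eqP; rewrite -addr_eq0 addrC.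
by have := theta_self (u + w); rewrite thetaDl !thetaDr !theta_self add0r addr0 => ->.
Qed.

Lemma theta_nondeg u : u != 0 -> exists w, theta u w != 0.
Proof.
move=> u_neq0; apply/existsP; apply: contraR u_neq0 => /existsPn theta_u0.
by apply/eqP/symp.2.2.2 => w; apply/eqP; rewrite -[_ == 0]negbK theta_u0.
Qed.

Lemma theta_sum v (I : finType) (a : I -> 'F_p) (G : I -> V) :
  theta v (\sum_i a i *: G i) = \sum_i a i * theta v (G i).
Proof.
rewrite (Rlinear_sum (theta_linearr v)); apply: eq_bigr => i _.
exact: (RlinearZ (theta_linearr v)).
Qed.

(* [theta v] as a row vector, so that transvections can be written as matrices. *)
Definition theta_row v : 'rV['F_p]_n := \row_(j < n) theta v (delta_mx j 0).

Lemma mul_theta_row v x : theta_row v *m x = (theta v x)%:M.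
Proof.
have Ex : x = \sum_(j < n) x j 0 *: delta_mx j 0.
  by rewrite {1}(matrix_sum_delta x); apply: eq_bigr => j _; rewrite big_ord1.
apply/matrixP => i j; rewrite !ord1 !mxE [in RHS]Ex theta_sum eqxx mulr1n.
by apply: eq_bigr => k _; rewrite mxE mulrC.
Qed.

Definition transvection v (s : 'F_p) : 'M['F_p]_n := 1%:M + s *: (v *m theta_row v).

Lemma mul_transvection v s x : transvection v s *m x = x + (s * theta v x) *: v.
Proof.
rewrite /transvection mulmxDl mul1mx -scalemxAl -mulmxA mul_theta_row.
by rewrite mul_mx_scalar scalerA.
Qed.

Lemma transvectionK v s : transvection v s *m transvection v (- s) = 1%:M.
Proof.
rewrite /transvection mulmxDl mul1mx mulmxDr mulmx1 -!scalemxAl -!scalemxAr.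
rewrite !mulmxA -[v *m theta_row v *m v]mulmxA mul_theta_row theta_self.
by rewrite mul_mx_scalar scale0r mul0mx !scaler0 addr0 scaleNr addrNK.
Qed.

Lemma transvection_Sp v s : in_Sp theta (transvection v s).
Proof.
split; first exact: (mulmx1_unit (transvectionK v s)).1.
move=> x y; rewrite !mul_transvection thetaDl !thetaDr !thetaZl !thetaZr theta_self.
by rewrite (theta_anti v x); ring.
Qed.

Section Heisenberg.
Variable N : nat.
Hypotheses (p_prime : prime p) (p_odd : odd p) (N_gt0 : (0 < N)%N).
Local Notation H := (heis p N n).
Local Notation hm := (heis_mul theta).

Lemma Fp_half_add (x : 'F_p) : x / 2%:R + x / 2%:R = x.
Proof.
have two_neq0 : (2%:R : 'F_p) != 0.
  have p_gt2 : (2 < p)%N by move: p_prime p_odd; case: (p) => [|[|[|]]].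
  by apply/eqP => two0; have := val_Fp_nat p_prime 2; rewrite two0 /= modn_small.
by field.
Qed.

Lemma pN_gt1 : (1 < p ^ N)%N.
Proof.
rewrite -(prednK N_gt0) expnS (@leq_trans p) ?prime_gt1 //.
by rewrite leq_pmulr // expn_gt0 prime_gt0.
Qed.

Lemma card_Zp_pN : #|{: 'Z_(p ^ N)}| = (p ^ N)%N.
Proof. by rewrite card_ord Zp_cast ?pN_gt1. Qed.

Lemma iota_mu_nat m : iota_mu N (m%:R : 'F_p) = (p ^ N.-1 * m)%:R.
Proof.
rewrite /iota_mu (_ : val _ = m %% p)%N; last exact: val_Fp_nat.
rewrite [in RHS](divn_eq m p) mulnDr natrD.
have -> : (p ^ N.-1 * (m %/ p * p) = (m %/ p) * p ^ N)%N.
  by rewrite -(prednK N_gt0) expnSr prednK //; ring.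
by rewrite natrM (natrM _ (m %/ p)) (pchar_Zp pN_gt1) mulr0 add0r.
Qed.

Lemma iota_muD (x y : 'F_p) : iota_mu N (x + y) = iota_mu N x + iota_mu N y.
Proof. by rewrite -(natr_Zp x) -(natr_Zp y) -natrD !iota_mu_nat -natrD mulnDr. Qed.

Lemma iota_mu0 : iota_mu N (0 : 'F_p) = 0.
Proof.
have := iota_muD 0 0; rewrite addr0 => E.
by apply: (addrI (iota_mu N (0 : 'F_p))); rewrite addr0 -E.
Qed.

Lemma iota_muN (x : 'F_p) : iota_mu N (- x) = - iota_mu N x.
Proof. by apply/eqP; rewrite -addr_eq0 -iota_muD addNr iota_mu0. Qed.

Definition heis_inv (h : H) : H := (- h.1, - h.2).

Lemma heis_mulA (a b c : H) : hm (hm a b) c = hm a (hm b c).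
Proof.
case: a b c => [a1 a2] [b1 b2] [c1 c2]; rewrite /heis_mul /=.
by congr pair; [rewrite thetaDl thetaDr !mulrDl !iota_muD; ring | rewrite addrA].
Qed.

Lemma heis_mul1l (h : H) : hm (0, 0) h = h.
Proof. by case: h => a b; rewrite /heis_mul /= theta0l mul0r iota_mu0 !add0r addr0. Qed.

Lemma heis_mul1r (h : H) : hm h (0, 0) = h.
Proof. by case: h => a b; rewrite /heis_mul /= theta0r mul0r iota_mu0 !addr0. Qed.

Lemma heis_mulV (h : H) : hm h (heis_inv h) = (0, 0).
Proof.
case: h => a b; rewrite /heis_mul /= thetaNr theta_self oppr0 mul0r iota_mu0.
by rewrite !subrr addr0.
Qed.

Lemma heis_mulVl (h : H) : hm (heis_inv h) h = (0, 0).
Proof.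
case: h => a b; rewrite /heis_mul /= thetaNl theta_self oppr0 mul0r iota_mu0.
by rewrite addr0 !addNr.
Qed.

Lemma heis_invM (a b : H) : heis_inv (hm a b) = hm (heis_inv b) (heis_inv a).
Proof.
case: a b => [a1 a2] [b1 b2]; rewrite /heis_inv /heis_mul /=; congr pair.
  by rewrite thetaNl thetaNr opprK (theta_anti b2 a2) mulNr iota_muN; ring.
by rewrite opprD addrC.
Qed.

Lemma heis_invK (h : H) : heis_inv (heis_inv h) = h.
Proof. by case: h => a b; rewrite /heis_inv /= !opprK. Qed.

Lemma heis_mulIr (x : H) : injective (fun h => hm h x).
Proof.
move=> a b /= /(congr1 (fun y => hm y (heis_inv x))).
by rewrite !heis_mulA heis_mulV !heis_mul1r.
Qed.

Lemma heis_mul_centrall c (h : H) : hm (c, 0) h = (c + h.1, h.2).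
Proof. by case: h => a b; rewrite /heis_mul /= theta0l mul0r iota_mu0 addr0 add0r. Qed.

Lemma heis_mul_centralr c (h : H) : hm h (c, 0) = (h.1 + c, h.2).
Proof. by case: h => a b; rewrite /heis_mul /= theta0r mul0r iota_mu0 !addr0. Qed.

Lemma heis_mul_vec x y : hm (0, x) (0, y) = (iota_mu N (theta x y / 2%:R), x + y).
Proof. by rewrite /heis_mul /= addr0 add0r. Qed.

Lemma heis_mul_swap (h : H) y : hm h (0, y) = hm (iota_mu N (theta h.2 y), y) h.
Proof.
case: h => a u; rewrite /heis_mul /=; congr pair; last by rewrite addrC.
have -> : iota_mu N (theta u y) = iota_mu N (theta u y / 2%:R) *+ 2.
  by rewrite mulr2n -iota_muD Fp_half_add.
by rewrite (theta_anti u y) mulNr iota_muN; ring.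
Qed.

Lemma heis_conj_vec u v :
  hm (0, v) (hm (0, - u) (0, - v)) = (iota_mu N (theta u v), - u) :> H.
Proof.
rewrite /heis_mul /=; congr pair; last by rewrite addrCA subrr addr0.
rewrite !add0r thetaNl thetaNr opprK thetaDr !thetaNr theta_self oppr0 addr0.
by rewrite (theta_anti u v) opprK -iota_muD Fp_half_add.
Qed.

Section Representations.
Variables (R : comPzRingType) (nu : 'Z_(p ^ N) -> R).
Hypotheses (nuD : forall a b, nu (a + b) = nu a * nu b) (nu0 : nu 0 = 1).
Variable W : {set 'cV['F_p]_n}.
Hypothesis W_lagrangian : is_Lagrangian theta W.
Local Notation etaW := (in_etaW theta nu W).

Definition chi (k : 'F_p) := nu (iota_mu N k).

Lemma chiD x y : chi (x + y) = chi x * chi y.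
Proof. by rewrite /chi iota_muD nuD. Qed.

Lemma chi0 : chi 0 = 1.
Proof. by rewrite /chi iota_mu0 nu0. Qed.

Lemma mem0W : 0 \in W.
Proof. exact: W_lagrangian.1. Qed.

Lemma memWD v w : v \in W -> w \in W -> v + w \in W.
Proof. by move=> vW wW; have := W_lagrangian.2.1 1 v w vW wW; rewrite scale1r. Qed.

Lemma memWZ a v : v \in W -> a *: v \in W.
Proof. by move=> vW; have := W_lagrangian.2.1 a v 0 vW mem0W; rewrite addr0. Qed.

Lemma memWN v : v \in W -> - v \in W.
Proof. by move=> vW; rewrite -scaleN1r memWZ. Qed.

Lemma theta_memW v w : v \in W -> w \in W -> theta v w = 0.
Proof. by move=> vW; apply: (W_lagrangian.2.2 v).1. Qed.

Lemma notin_W_theta_neq0 v : v \notin W -> exists2 w, w \in W & theta v w != 0.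
Proof.
move=> vW; have /existsP[w /andP[wW theta_vw]] : [exists w, (w \in W) && (theta v w != 0)].
  apply: contraR vW => /existsPn theta_v0; apply/(W_lagrangian.2.2 v).2 => w wW.
  by apply/eqP; move: (theta_v0 w); rewrite wW negbK.
by exists w.
Qed.

Lemma heis_rep_central (M : lmodType R) (rho : H -> M -> M) :
  is_heis_rep theta rho -> (forall c x, rho (c, 0) x = nu c *: x) ->
  forall c v x, rho (c, v) x = nu c *: rho (0, v) x.
Proof.
move=> [_ [rho_mul _]] rho_central c v x.
by rewrite -rho_central -rho_mul heis_mul_centrall addr0.
Qed.

Lemma etaW_mul_vec F h w : etaW F -> w \in W -> F (hm h (0, w)) = chi (theta h.2 w) * F h.
Proof. by move=> etaF wW; rewrite heis_mul_swap etaF. Qed.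

Lemma etaW_rtrans k F : etaW F -> etaW (rtrans theta k F).
Proof. by move=> etaF c w h wW; rewrite !ffunE heis_mulA etaF. Qed.

Lemma etaW0 : etaW 0.
Proof. by move=> c w h _; rewrite !ffunE mulr0. Qed.

Definition etaW_base : {ffun H -> R} := [ffun h => nu h.1 * (h.2 \in W)%:R].

Lemma etaW_base_eta : etaW etaW_base.
Proof.
move=> c w [a u] wW; rewrite !ffunE /heis_mul /=.
have [uW | uNW] := boolP (u \in W).
  by rewrite memWD // theta_memW // mul0r iota_mu0 addr0 !nuD mulrA.
suff /negbTE -> : w + u \notin W by rewrite !mulr0.
by apply: contra uNW => wuW; rewrite -(addKr w u) memWD // memWN.
Qed.

Definition convolution (M : lmodType R) (rho : H -> M -> M) (z : M) (F : {ffun H -> R}) : M :=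
  \sum_(h : H) F h *: rho (heis_inv h) z.

Lemma convolution_homW (M : lmodType R) (rho : H -> M -> M) z :
  is_heis_rep theta rho -> homW theta nu W rho (convolution rho z).
Proof.
move=> [rho_lin [rho_mul _]]; split=> [a F1 F2 _ _ | k F _].
  rewrite /convolution scaler_sumr -big_split /=.
  by apply: eq_bigr => h _; rewrite ffunE scalerDl scalerA.
rewrite /convolution (Rlinear_sum (rho_lin k)) (reindex_inj (@heis_mulIr (heis_inv k))) /=.
apply: eq_bigr => h _; rewrite ffunE heis_mulA heis_mulVl heis_mul1r.
by rewrite heis_invM heis_invK rho_mul (RlinearZ (rho_lin k)).
Qed.

Lemma convolution_base (M : lmodType R) (rho : H -> M -> M) z :
  is_heis_rep theta rho -> (forall c x, rho (c, 0) x = nu c *: x) ->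
  convolution rho z etaW_base = (p ^ N)%:R *: \sum_u (u \in W)%:R *: rho (0, - u) z.
Proof.
move=> rho_rep rho_central; rewrite /convolution.
transitivity (\sum_(h : H) (h.2 \in W)%:R *: rho (0, - h.2) z).
  apply: eq_bigr => [[a u]] _; rewrite ffunE /heis_inv /=.
  rewrite [rho (- a, _) _](heis_rep_central rho_rep rho_central) scalerA.
  by rewrite mulrAC -nuD subrr nu0 mul1r.
rewrite -(pair_big predT predT (fun (_ : 'Z_(p ^ N)) u => (u \in W)%:R *: rho (0, - u) z)) /=.
by rewrite sumr_const card_Zp_pN scaler_nat.
Qed.

Lemma convolution_span (M : lmodType R) (rho : H -> M -> M) x :
  is_heis_rep theta rho -> (forall c x, rho (c, 0) x = nu c *: x) ->
  (forall u, u != 0 -> \sum_v chi (theta u v) = 0) ->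
  \sum_v convolution rho (rho (0, - v) x) (rtrans theta (0, v) etaW_base)
    = (p ^ (N + n))%:R *: x.
Proof.
move=> rho_rep rho_central sum_chi0; have [rho_lin [rho_mul rho1]] := rho_rep.
transitivity ((p ^ N)%:R *: \sum_v \sum_u (u \in W)%:R *: (chi (theta u v) *: rho (0, - u) x)).
  rewrite scaler_sumr; apply: eq_bigr => v _.
  rewrite ((convolution_homW _ rho_rep).2 _ _ etaW_base_eta).
  rewrite convolution_base // (RlinearZ (rho_lin _)) (Rlinear_sum (rho_lin _)).
  congr (_ *: _); apply: eq_bigr => u _.
  rewrite (RlinearZ (rho_lin _)) -!rho_mul heis_mulA heis_conj_vec.
  by rewrite (heis_rep_central rho_rep rho_central).
rewrite exchange_big (bigD1 0) //= [X in _ + X]big1 => [|u u_neq0]; last first.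
  by rewrite -scaler_sumr -scaler_suml sum_chi0 // scale0r scaler0.
under eq_bigr do rewrite theta0l chi0 scale1r mem0W oppr0 rho1 scale1r.
by rewrite sumr_const card_mx card_Fp // muln1 addr0 -scaler_nat scalerA -natrM -expnD.
Qed.

Section CharacterSums.
Variable p_inv : R.
Hypothesis p_invP : p_inv * p%:R = 1.

Definition chi_sum := \sum_(k : 'F_p) chi k.

Lemma sum_chi_theta_eq0 u : chi_sum = 0 -> u != 0 -> \sum_v chi (theta u v) = 0.
Proof.
move=> chi_sum0 u_neq0; have [v1 theta_uv1] := theta_nondeg u_neq0.
set S := \sum_v chi (theta u v).
have S_shift t : chi (t * theta u v1) * S = S.
  rewrite /S mulr_sumr [RHS](reindex_inj (addIr (t *: v1))) /=.
  by apply: eq_bigr => v _; rewrite thetaDr thetaZr chiD mulrC.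
have pS0 : S *+ p = 0.
  rewrite -(card_Fp p_prime) -sumr_const -(eq_bigr _ (fun t _ => S_shift t)).
  have sum_chi_mul0 : \sum_t chi (t * theta u v1) = 0.
    by move: chi_sum0; rewrite /chi_sum (reindex_inj (mulIf theta_uv1)).
  by rewrite -mulr_suml sum_chi_mul0 mul0r.
by rewrite -[S]mul1r -p_invP -mulrA mulr_natl pS0 mulr0.
Qed.

Section WeilModel.
Variable omW : 'M['F_p]_n -> {ffun H -> R} -> {ffun H -> R}.
Hypothesis omW_weil : is_weil_model theta nu W omW.

Definition e_triv := p_inv * chi_sum.

Lemma e_triv_chi k : e_triv * chi k = e_triv.
Proof.
rewrite /e_triv -mulrA /chi_sum mulr_suml [in RHS](reindex_inj (addIr k)) /=.
by congr (_ * _); apply: eq_bigr => j _; rewrite chiD.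
Qed.

Definition e_invariant (G : {ffun H -> R}) (y : H) :=
  forall h, e_triv * G (hm h y) = e_triv * G h.

Lemma e_invariantM G y1 y2 : e_invariant G y1 -> e_invariant G y2 -> e_invariant G (hm y1 y2).
Proof. by move=> inv1 inv2 h; rewrite -heis_mulA inv2 inv1. Qed.

Lemma e_invariantV G y : e_invariant G y -> e_invariant G (heis_inv y).
Proof. by move=> inv h; rewrite -{2}[h]heis_mul1r -(heis_mulVl y) -heis_mulA inv. Qed.

Lemma e_invariant_central G k : etaW G -> e_invariant G (iota_mu N k, 0).
Proof.
move=> etaG h; rewrite heis_mul_centralr addrC -heis_mul_centrall etaG ?mem0W //.
by rewrite mulrA e_triv_chi.
Qed.

Lemma e_invariant_W G w : etaW G -> w \in W -> e_invariant G (0, w).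
Proof. by move=> etaG wW h; rewrite etaW_mul_vec // mulrA e_triv_chi. Qed.

Lemma e_invariant_vecD G y1 y2 : etaW G ->
  e_invariant G (0, y1) -> e_invariant G (0, y2) -> e_invariant G (0, y1 + y2).
Proof.
move=> etaG inv1 inv2.
have -> : (0, y1 + y2) = hm (iota_mu N (- (theta y1 y2 / 2%:R)), 0) (hm (0, y1) (0, y2)) :> H.
  by rewrite heis_mul_vec heis_mul_centrall /= iota_muN addNr.
by apply: e_invariantM; [apply: e_invariant_central | apply: e_invariantM].
Qed.

Lemma e_invariant_vecN G y : e_invariant G (0, y) -> e_invariant G (0, - y).
Proof. by move/e_invariantV; rewrite /heis_inv /= oppr0. Qed.

Lemma e_invariant_vecZ G y a : etaW G -> e_invariant G (0, y) -> e_invariant G (0, a *: y).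
Proof.
move=> etaG inv; rewrite -(natr_Zp a); elim: (nat_of_ord a) => [|k IHk].
  by rewrite scale0r => h; rewrite heis_mul1r.
by rewrite mulrS scalerDl scale1r; apply: e_invariant_vecD.
Qed.

(* [e_triv * F] is invariant under [(0, w0)]; transporting this by [omW g] and
   using [g w0 - w0 = s (theta v w0) v] gives invariance under [(0, v)]. *)
Lemma transvection_e_invariant v s w0 F : s != 0 -> w0 \in W -> theta v w0 != 0 ->
  etaW F -> e_invariant (omW (transvection v s) F) (0, v).
Proof.
move=> s_neq0 w0W theta_vw0 etaF; set g := transvection v s; set Q := omW g F.
have [omW_eta [omW_lin omW_heis]] := omW_weil.1 g (transvection_Sp v s).
have etaQ : etaW Q := omW_eta F etaF.
have eF_w0 : lincomb e_triv (rtrans theta (0, w0) F) 0 = lincomb e_triv F 0.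
  by apply/ffunP => h; rewrite !ffunE etaW_mul_vec // mulrA e_triv_chi.
have eta0 : etaW 0 := etaW0.
have etaFw0 := etaW_rtrans (0, w0) etaF.
have := congr1 (omW g) eF_w0; rewrite !omW_lin //.
rewrite -iota_mu0 omW_heis // iota_mu0 => eQ_gw0.
have inv_gw0 : e_invariant Q (0, g *m w0).
  by move=> h; have := congr1 (fun G : {ffun H -> R} => G h) eQ_gw0; rewrite !ffunE => /addIr.
have := e_invariant_vecD etaQ inv_gw0 (e_invariant_vecN (e_invariant_W etaQ w0W)).
rewrite mul_transvection addrAC subrr add0r => /(e_invariant_vecZ (s * theta v w0)^-1 etaQ).
by rewrite scalerA mulVf ?scale1r // mulf_neq0.
Qed.

(* [omW (transvection v (-1))] maps [omW (transvection v 1) etaW_base] back to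
   [etaW_base], so [e_triv * etaW_base] is invariant under [(0, v)]; comparing its
   values [e_triv] at the identity and [0] at [(0, v)] gives [e_triv = 0]. *)
Lemma chi_sum_eq0 v : v \notin W -> chi_sum = 0.
Proof.
move=> vNW; have [w0 w0W theta_vw0] := notin_W_theta_neq0 vNW.
have etaB := etaW_base_eta.
have [Tv1_Sp TvN1_Sp] := (transvection_Sp v 1, transvection_Sp v (-1)).
have base_inv : e_invariant etaW_base (0, v).
  have etaF := (omW_weil.1 _ Tv1_Sp).1 _ etaB.
  have N1_neq0 : (-1 : 'F_p) != 0 by rewrite oppr_eq0 oner_neq0.
  have Tv_inv : transvection v (-1) *m transvection v 1 = 1%:M.
    by have := transvectionK v (-1); rewrite opprK.
  have := transvection_e_invariant N1_neq0 w0W theta_vw0 etaF.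
  by rewrite -omW_weil.2.1 // Tv_inv omW_weil.2.2.
have := base_inv (0, 0); rewrite heis_mul1l !ffunE /= (negbTE vNW) mem0W nu0.
rewrite mul1r !mulr0 !mulr1 => e_triv0.
by rewrite -[chi_sum]mul1r -p_invP mulrAC -/e_triv -e_triv0 mul0r.
Qed.

Lemma weil_sum_chi_theta_eq0 u : u != 0 -> \sum_v chi (theta u v) = 0.
Proof.
have [/forallP allW | /forallPn[v vNW]] := boolP [forall v, v \in W]; last first.
  exact/sum_chi_theta_eq0/(chi_sum_eq0 vNW).
by move=> /theta_nondeg[w]; rewrite theta_memW ?allW ?eqxx.
Qed.

End WeilModel.
End CharacterSums.
End Representations.
End Heisenberg.
End Symplectic.

Section Intertwiners.
Variables (p N n : nat) (R : comPzRingType).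
Variables (theta : 'cV['F_p]_n -> 'cV['F_p]_n -> 'F_p) (nu : 'Z_(p ^ N) -> R).
Variable W : {set 'cV['F_p]_n}.
Variable omW : 'M['F_p]_n -> {ffun heis p N n -> R} -> {ffun heis p N n -> R}.
Variables (M M' : lmodType R) (rho : heis p N n -> M -> M) (rho' : heis p N n -> M' -> M').

Lemma homW_comp (f : M -> M') phi :
  hom_H theta rho rho' f -> homW theta nu W rho phi -> homW theta nu W rho' (f \o phi).
Proof.
move=> [f_lin f_hom] [phi_lin phi_hom]; split=> [a F1 F2 etaF1 etaF2 | h F etaF] /=.
  by rewrite phi_lin // f_lin.
by rewrite phi_hom // f_hom.
Qed.

Lemma hom_H_commutes_on_homW (om : 'M['F_p]_n -> M -> M) (om' : 'M['F_p]_n -> M' -> M')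
    (f : M -> M') phi g F :
  is_assoc_weil theta nu W omW rho om -> is_assoc_weil theta nu W omW rho' om' ->
  hom_H theta rho rho' f -> homW theta nu W rho phi -> in_Sp theta g ->
  in_etaW theta nu W F -> f (om g (phi F)) = om' g (f (phi F)).
Proof.
move=> om_weil om'_weil f_hom phi_homW g_Sp etaF.
have f_phi_homW := homW_comp f_hom phi_homW.
by rewrite (om_weil g g_Sp).2 // ((om'_weil g g_Sp).2 (f \o phi)).
Qed.

End Intertwiners.

Unset Implicit Arguments.

Theorem mainTheorem13 (p N n : nat) (R : comPzRingType)
  (theta : 'cV['F_p]_n -> 'cV['F_p]_n -> 'F_p) (nu : 'Z_(p ^ N) -> R)
  (W : {set 'cV['F_p]_n})
  (omW : 'M['F_p]_n -> {ffun heis p N n -> R} -> {ffun heis p N n -> R})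
  (M M' : lmodType R) (rho : heis p N n -> M -> M) (rho' : heis p N n -> M' -> M')
  (om : 'M['F_p]_n -> M -> M) (om' : 'M['F_p]_n -> M' -> M') :
  prime p -> odd p -> (0 < N)%N ->
  is_symplectic_form theta ->
  Zmu_sqrtp_algebra R p ->
  is_inj_char nu ->
  is_Lagrangian theta W ->
  is_weil_model theta nu W omW ->
  is_heisenberg_rep theta nu rho ->
  is_heisenberg_rep theta nu rho' ->
  is_assoc_weil theta nu W omW rho om ->
  is_assoc_weil theta nu W omW rho' om' ->
  forall f : M -> M',
    hom_SpH theta rho rho' om om' f <-> hom_H theta rho rho' f.
Proof.
move=> p_prime p_odd N_gt0 symp [_ [p_inv p_invP]] [nuD [nu0 _]] W_lag omW_weil
  [rho_rep [rho_central _]] _ om_weil om'_weil f.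
split=> [[] // | f_hom]; split=> // g x g_Sp.
have [f_lin _] := f_hom; have [om_lin _] := om_weil g g_Sp; have [om'_lin _] := om'_weil g g_Sp.
have -> : x = p_inv ^+ (N + n) *:
    \sum_v convolution rho (rho (0, - v) x) (rtrans theta (0, v) (etaW_base nu W)).
  rewrite (convolution_span symp p_prime p_odd N_gt0 nuD nu0 W_lag _ rho_rep rho_central).
    by rewrite scalerA natrX -exprMn p_invP expr1n scale1r.
  exact: (weil_sum_chi_theta_eq0 symp p_prime p_odd N_gt0 nuD nu0 W_lag p_invP omW_weil).
rewrite (RlinearZ om_lin) !(RlinearZ f_lin) (RlinearZ om'_lin).
rewrite (Rlinear_sum om_lin) !(Rlinear_sum f_lin) (Rlinear_sum om'_lin).
congr (_ *: _); apply: eq_bigr => v _.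
apply: (hom_H_commutes_on_homW om_weil om'_weil f_hom _ g_Sp).
  exact: (convolution_homW symp p_prime N_gt0).
exact: (etaW_rtrans symp p_prime N_gt0 _ (etaW_base_eta p_prime N_gt0 nuD W_lag)).
Qed.
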